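(* Assume that for $i=0,1$ the matrix $(\mathbf{X}^i)^T\mathbf{W}^i\mathbf{X}^i$ is invertible. Then $S_{d,\mathbf{w}^\lambda}$ is the unique linear subdivision scheme whose rule producing $(S\mathbf{f})_{2j+i}$ has the form $\sum_{m\in M_i} a_m f_{j+(m+i)/2}$ ($i=0,1$), which reproduces $\Pi_d$, and whose sub-masks are of the form $\mathbf{a}^i=\mathbf{W}^i\mathbf{X}^i\boldsymbol{\alpha}^i$ for some $\boldsymbol{\alpha}^i\in\mathbb{R}^{d+1}$, $i=0,1$.
   Context: Let $\phi:[0,1]\to[0,1]$ be non-increasing with $\phi(0)=1$, $\omega(x)=\phi(|x|)$ for $|x|\le1$ and $0$ otherwise, $\lambda\in(0,\infty)\setminus\mathbb{N}$, and $w^\lambda_m=\omega(m/\lambda)$, $m\in\mathbb{Z}$. Let $d\ge0$ be an integer, $\Pi_d$ the real polynomials of degree at most $d$, and $A(x)=(1,x,\ldots,x^d)^T$. For $i\in\{0,1\}$ let $M_i=\{m\in\mathbb{Z}: m\equiv i\pmod 2,\ |m|<\lambda\}$, let $\mathbf{X}^i$ be the $|M_i|\times(d+1)$ matrix whose rows are $A(m)^T$, $m\in M_i$ in increasing order, and $\mathbf{W}^i$ the diagonal matrix with diagonal $(w^\lambda_m)_{m\in M_i}$. The weighted local polynomial regression (WLPR) scheme $S_{d,\mathbf{w}^\lambda}$ maps $\mathbf{f}=(f_j)_{j\in\mathbb{Z}}$ to $(S\mathbf{f})_{2j+i}=\hat p(0)$ ($i\in\{0,1\}$, $j\in\mathbb{Z}$),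 where $\hat p$ minimizes $\sum_{m\in M_i} w^\lambda_m(f_{j+(m+i)/2}-p(m))^2$ over $p\in\Pi_d$. Under the invertibility assumption the minimizer is unique and $(S\mathbf{f})_{2j+i}=\sum_{m\in M_i}a_m f_{j+(m+i)/2}$; the sub-masks are the column vectors $\mathbf{a}^i=(a_m)_{m\in M_i}$ (in increasing order of $m$). A linear scheme $S$ reproduces $\Pi_d$ if $S\{p(2j)\}_{j\in\mathbb{Z}}=\{p(j)\}_{j\in\mathbb{Z}}$ for every $p\in\Pi_d$. *)

From HB Require Import structures.
From mathcomp Require Import all_boot all_order all_algebra.
From mathcomp Require Import reals.
Set Implicit Arguments. Unset Strict Implicit. Unset Printing Implicit Defensive.
Import Order.TTheory GRing.Theory Num.Theory.
Local Open Scope ring_scope.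

Section WLPR.
Variable R : realType.

Definition omega (phi : R -> R) (x : R) : R :=
  if `|x| <= 1 then phi `|x| else 0.

Definition wl (phi : R -> R) (lam : R) (m : int) : R := omega phi (m%:~R / lam).

Definition cands (lam : R) : seq int :=
  [seq (k%:Z - (Num.truncn lam)%:Z)%R | k <- iota 0 (2 * Num.truncn lam).+1].

Definition Mset (lam : R) (i : bool) : seq int :=
  [seq m <- cands lam | ((m %% 2)%Z == (i : nat)%:Z) && (`|(m%:~R : R)| < lam)].

Definition Xmat (lam : R) (d : nat) (i : bool) : 'M[R]_(size (Mset lam i), d.+1) :=
  \matrix_(r, k) ((nth 0 (Mset lam i) r)%:~R ^+ k).

Definition Wmat (phi : R -> R) (lam : R) (i : bool) : 'M[R]_(size (Mset lam i)) :=
  diag_mx (\row_r wl phi lam (nth 0 (Mset lam i) r)).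

Definition rule (lam : R) (i : bool) (a : 'cV[R]_(size (Mset lam i)))
  (f : int -> R) (j : int) : R :=
  \sum_(r < size (Mset lam i))
     a r ord0 * f (j + ((nth 0 (Mset lam i) r + (i : nat)%:Z) %/ 2)%Z).

Definition subdiv (lam : R) (a0 : 'cV[R]_(size (Mset lam false)))
  (a1 : 'cV[R]_(size (Mset lam true))) (f : int -> R) (k : int) : R :=
  if (k %% 2)%Z == 0 then rule a0 f (k %/ 2)%Z else rule a1 f (k %/ 2)%Z.

Definition reproduces (lam : R) (d : nat) (a0 : 'cV[R]_(size (Mset lam false)))
  (a1 : 'cV[R]_(size (Mset lam true))) : Prop :=
  forall p : {poly R}, (size p <= d.+1)%N ->
    forall k : int, subdiv a0 a1 (fun j => p.[(2 * j)%:~R]) k = p.[k%:~R].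

Definition wlpr_obj (phi : R -> R) (lam : R) (i : bool) (f : int -> R) (j : int)
  (p : {poly R}) : R :=
  \sum_(m <- Mset lam i)
     wl phi lam m * (f (j + ((m + (i : nat)%:Z) %/ 2)%Z) - p.[m%:~R]) ^+ 2.

Definition wlpr_min (phi : R -> R) (lam : R) (d : nat) (i : bool) (f : int -> R)
  (j : int) (p : {poly R}) : Prop :=
  (size p <= d.+1)%N /\
  forall q : {poly R}, (size q <= d.+1)%N ->
    wlpr_obj phi lam i f j p <= wlpr_obj phi lam i f j q.

End WLPR.

From mathcomp Require Import zify.
From mathcomp Require Import all_boot all_order all_algebra.
From mathcomp Require Import reals.
From mathcomp Require Import ring.
Set Implicit Arguments. Unset Strict Implicit. Unset Printing Implicit Defensive.
Import Order.TTheory GRing.Theory Num.Theory.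
Local Open Scope ring_scope.

(* The WLPR value at 0 is the constant coefficient c_0 of the weighted
   least-squares solution c = G^-1 X^T W F, G = X^T W X, so it is the linear
   rule with mask a = W X G^-1 e_0.  A linear rule reproduces polynomials of
   degree <= d exactly when its moments vanish except the zeroth,
   i.e. X^T a = e_0; for a mask of the form a = W X alpha this reads
   G alpha = e_0, which forces alpha = G^-1 e_0. *)

Section WeightedLeastSquares.
Variables (R : realFieldType) (n d : nat) (X : 'M[R]_(n, d.+1)) (w : 'I_n -> R).
Hypothesis w_ge0 : forall r, 0 <= w r.
Let W : 'M[R]_n := diag_mx (\row_r w r).
Let G := X^T *m W *m X.
Hypothesis G_unit : G \in unitmx.

Definition wnorm2 (u : 'cV[R]_n) : R := \sum_r w r * u r 0 ^+ 2.

Definition wls_coef (F : 'cV[R]_n) : 'cV[R]_d.+1 := invmx G *m (X^T *m W *m F).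

Definition wls_mask : 'cV[R]_n := W *m X *m (invmx G *m delta_mx 0 0).

Lemma wnorm2_ge0 u : 0 <= wnorm2 u.
Proof. by apply: sumr_ge0 => r _; rewrite mulr_ge0 // sqr_ge0. Qed.

Lemma wls_normal_eq F : X^T *m W *m (F - X *m wls_coef F) = 0.
Proof. by rewrite mulmxBr /wls_coef (mulmxA (X^T *m W) X) -/G mulKVmx // subrr. Qed.

Lemma wnorm2_wls_split F c :
  wnorm2 (F - X *m c) = wnorm2 (F - X *m wls_coef F) + wnorm2 (X *m (wls_coef F - c)).
Proof.
set u := F - X *m wls_coef F; set v := X *m (wls_coef F - c).
have -> : F - X *m c = u + v by rewrite /u /v mulmxBr addrA subrK.
have cross0 : \sum_r w r * u r 0 * v r 0 = 0.
  have : (v^T *m (W *m u)) 0 0 = 0.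
    by rewrite /v trmx_mul -mulmxA (mulmxA X^T) wls_normal_eq mulmx0 mxE.
  rewrite mxE => vWu0; rewrite -[RHS]vWu0; apply: eq_bigr => r _.
  by rewrite mul_diag_mx !mxE mulrC mulrA.
have -> : wnorm2 (u + v) = wnorm2 u + wnorm2 v + 2 * \sum_r w r * u r 0 * v r 0.
  rewrite /wnorm2 mulr_sumr -!big_split /=.
  by apply: eq_bigr => r _; rewrite !mxE; ring.
by rewrite cross0 mulr0 addr0.
Qed.

Lemma wnorm2_mulmx_eq0 c : wnorm2 (X *m c) = 0 -> c = 0.
Proof.
move=> Xc0.
have WXc0 : W *m (X *m c) = 0.
  apply/matrixP => r k; rewrite ord1 mul_diag_mx mxE [RHS]mxE mxE.
  have /eqP : w r * (X *m c) r 0 ^+ 2 = 0.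
    by apply: (psumr_eq0P _ Xc0) => // s _; rewrite mulr_ge0 // sqr_ge0.
  by rewrite mulf_eq0 sqrf_eq0 => /orP[] /eqP->; rewrite ?mul0r ?mulr0.
have : G *m c = 0 by rewrite /G -!mulmxA WXc0 mulmx0.
by move/(congr1 (mulmx (invmx G))); rewrite mulKmx // mulmx0.
Qed.

Lemma wls_coef_min F c : wnorm2 (F - X *m wls_coef F) <= wnorm2 (F - X *m c).
Proof. by rewrite (wnorm2_wls_split F c) lerDl wnorm2_ge0. Qed.

Lemma wls_coef_unique F c :
  wnorm2 (F - X *m c) <= wnorm2 (F - X *m wls_coef F) -> c = wls_coef F.
Proof.
rewrite (wnorm2_wls_split F c) gerDl => le0.
have /wnorm2_mulmx_eq0 /eqP : wnorm2 (X *m (wls_coef F - c)) = 0.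
  by apply/eqP; rewrite eq_le le0 wnorm2_ge0.
by rewrite subr_eq0 => /eqP.
Qed.

Lemma wls_mask_moments : X^T *m wls_mask = delta_mx 0 0.
Proof. by rewrite /wls_mask mulmxA mulmxA -/G mulKVmx. Qed.

Lemma wls_mask_dot F : (wls_mask^T *m F) 0 0 = wls_coef F 0 0.
Proof.
have splitF : F = X *m wls_coef F + (F - X *m wls_coef F) by rewrite addrC subrK.
rewrite {1}splitF mulmxDr mulmxA -[wls_mask^T *m X]trmxK trmx_mul trmxK wls_mask_moments.
have -> : wls_mask^T *m (F - X *m wls_coef F) = 0.
  rewrite /wls_mask !trmx_mul tr_diag_mx -!mulmxA (mulmxA X^T) wls_normal_eq.
  by rewrite !mulmx0.
by rewrite addr0 trmx_delta -rowE mxE.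
Qed.

Lemma wls_mask_unique alpha :
  X^T *m (W *m X *m alpha) = delta_mx 0 0 -> W *m X *m alpha = wls_mask.
Proof. by move=> moments; rewrite /wls_mask -moments mulmxA mulmxA -/G mulKmx. Qed.

End WeightedLeastSquares.

Lemma stencil_shift (i : bool) (m j : int) : (m %% 2)%Z = (i : nat)%:Z ->
  2 * (j + ((m + (i : nat)%:Z) %/ 2)%Z) = 2 * j + (i : nat)%:Z + m.
Proof. by case: i => /= m_mod2; lia. Qed.

Section LinearRules.
Variables (R : realType) (lam : R) (d : nat).

Definition poly_cV (q : {poly R}) : 'cV[R]_d.+1 := \col_k q`_k.

Definition stencil (i : bool) (f : int -> R) (j : int) : 'cV[R]_(size (Mset lam i)) :=
  \col_r f (j + ((nth 0 (Mset lam i) r + (i : nat)%:Z) %/ 2)%Z).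

Lemma Mset_mod2 i (r : 'I_(size (Mset lam i))) :
  (nth 0 (Mset lam i) r %% 2)%Z = (i : nat)%:Z.
Proof. by have := mem_nth 0 (ltn_ord r); rewrite mem_filter => /andP[/andP[/eqP]]. Qed.

Lemma Xmat_poly_cV i (q : {poly R}) (r : 'I_(size (Mset lam i))) :
  (size q <= d.+1)%N -> (Xmat lam d i *m poly_cV q) r 0 = q.[(nth 0 (Mset lam i) r)%:~R].
Proof.
move=> size_q; rewrite mxE (horner_coef_wide _ size_q).
by apply: eq_bigr => k _; rewrite !mxE mulrC.
Qed.

Lemma ruleE i (v : 'cV[R]_(size (Mset lam i))) f j :
  rule v f j = (v^T *m stencil i f j) 0 0.
Proof. by rewrite /rule mxE; apply: eq_bigr => r _; rewrite !mxE. Qed.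

Definition rule_reproduces (i : bool) (v : 'cV[R]_(size (Mset lam i))) : Prop :=
  forall p : {poly R}, (size p <= d.+1)%N -> forall j : int,
    rule v (fun j => p.[(2 * j)%:~R]) j = p.[(2 * j + (i : nat)%:Z)%:~R].

Lemma rule_reproducesP i (v : 'cV[R]_(size (Mset lam i))) :
  rule_reproduces v <-> (Xmat lam d i)^T *m v = delta_mx 0 0.
Proof.
split=> [repro | moments p size_p j].
  (* testing against (x - i)^k at j = 0 isolates the k-th moment of v *)
  apply/matrixP => k l; rewrite ord1.
  set p := ('X - ((i : nat)%:~R : R)%:P) ^+ k.
  have size_p : (size p <= d.+1)%N by rewrite size_exp_XsubC ltn_ord.
  have := repro p size_p 0.
  rewrite /p horner_exp hornerXsubC mulr0 add0r subrr expr0n !mxE eqxx andbT => <-.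
  apply: eq_bigr => r _.
  rewrite !mxE horner_exp hornerXsubC stencil_shift ?Mset_mod2 // mulr0 add0r intrD.
  by rewrite addrAC subrr add0r mulrC.
(* the samples of p(2 .) seen from position 2j+i are the values of q = p(. + 2j+i)
   at the nodes of M_i, so the rule returns the constant coefficient of q *)
set c : R := (2 * j + (i : nat)%:Z)%:~R.
set q := p \Po ('X + c%:P).
have size_q : (size q <= d.+1)%N by rewrite size_comp_poly2 // size_XaddC.
rewrite ruleE.
have -> : stencil i (fun j => p.[(2 * j)%:~R]) j = Xmat lam d i *m poly_cV q.
  apply/matrixP => r k; rewrite ord1 Xmat_poly_cV // mxE stencil_shift ?Mset_mod2 //.
  by rewrite /q horner_comp hornerD hornerX hornerC intrD addrC.
rewrite mulmxA -[v^T *m _]trmxK trmx_mul trmxK moments trmx_delta -rowE mxE.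
by rewrite mxE -horner_coef0 /q horner_comp hornerD hornerX hornerC add0r.
Qed.

Lemma subdiv_parity (b0 : 'cV[R]_(size (Mset lam false)))
    (b1 : 'cV[R]_(size (Mset lam true))) f j (i : bool) :
  subdiv b0 b1 f (2 * j + (i : nat)%:Z) = if i then rule b1 f j else rule b0 f j.
Proof.
rewrite /subdiv; have -> : ((2 * j + (i : nat)%:Z) %/ 2)%Z = j by case: i; lia.
have -> : ((2 * j + (i : nat)%:Z) %% 2)%Z = (i : nat)%:Z by case: i; lia.
by case: i.
Qed.

Lemma reproducesE (b0 : 'cV[R]_(size (Mset lam false)))
    (b1 : 'cV[R]_(size (Mset lam true))) :
  reproduces d b0 b1 <-> rule_reproduces b0 /\ rule_reproduces b1.
Proof.
split=> [repro | [repro0 repro1] p size_p k].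
  split=> p size_p j.
    by have := repro p size_p (2 * j + (false : nat)%:Z); rewrite subdiv_parity.
  by have := repro p size_p (2 * j + (true : nat)%:Z); rewrite subdiv_parity.
have [j [i ->]] : exists j (i : bool), k = 2 * j + (i : nat)%:Z.
  exists (k %/ 2)%Z; have [] : (k %% 2)%Z = 0 \/ (k %% 2)%Z = 1 by lia.
    by exists false; lia.
  by exists true; lia.
by rewrite subdiv_parity; case: i; [apply: repro1 | apply: repro0].
Qed.

End LinearRules.

Definition wlpr_weight (R : realType) (phi : R -> R) (lam : R) (i : bool)
  (r : 'I_(size (Mset lam i))) : R := wl phi lam (nth 0 (Mset lam i) r).
Arguments wlpr_weight {R} phi lam i r.

Section WLPRRule.
Variables (R : realType) (phi : R -> R) (lam : R) (d : nat).
Hypothesis phi_range : forall x : R, 0 <= x <= 1 -> 0 <= phi x <= 1.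

Lemma wlpr_weight_ge0 i r : 0 <= wlpr_weight phi lam i r.
Proof.
rewrite /wlpr_weight /wl /omega; case: ifP => // le_1.
by have /phi_range/andP[] : 0 <= `|(nth 0 (Mset lam i) r)%:~R / lam| <= 1
  by rewrite normr_ge0 le_1.
Qed.

Lemma wlpr_objE i f j (q : {poly R}) : (size q <= d.+1)%N ->
  wlpr_obj phi lam i f j q =
  wnorm2 (wlpr_weight phi lam i) (stencil lam i f j - Xmat lam d i *m poly_cV d q).
Proof.
move=> size_q; rewrite /wlpr_obj /wnorm2 (big_nth 0) big_mkord.
by apply: eq_bigr => r _; rewrite -(@Xmat_poly_cV _ lam d) // !mxE.
Qed.

Variables (i : bool) (f : int -> R) (j : int).
Hypothesis G_unit :
  (Xmat lam d i)^T *m Wmat phi lam i *m Xmat lam d i \in unitmx.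
Let weight_ge0 : forall r, 0 <= wlpr_weight phi lam i r := @wlpr_weight_ge0 i.
Let c := wls_coef (Xmat lam d i) (wlpr_weight phi lam i) (stencil lam i f j).

Definition wlpr_poly : {poly R} := \poly_(k < d.+1) c (inord k) 0.

Lemma poly_cV_wlpr_poly : poly_cV d wlpr_poly = c.
Proof.
apply/matrixP => k l; rewrite ord1 mxE coef_poly ltn_ord.
by rewrite inord_val.
Qed.

Lemma wlpr_poly_min : wlpr_min phi lam d i f j wlpr_poly.
Proof.
have size_wlpr : (size wlpr_poly <= d.+1)%N by apply: size_poly.
split=> // q size_q; rewrite !wlpr_objE // poly_cV_wlpr_poly.
exact: wls_coef_min weight_ge0 G_unit _ _.
Qed.

Lemma wlpr_min_rule p : wlpr_min phi lam d i f j p ->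
  rule (wls_mask (Xmat lam d i) (wlpr_weight phi lam i)) f j = p.[0].
Proof.
move=> [size_p p_min].
have size_wlpr : (size wlpr_poly <= d.+1)%N by apply: size_poly.
have := p_min _ size_wlpr; rewrite !wlpr_objE // poly_cV_wlpr_poly.
move/(wls_coef_unique weight_ge0 G_unit) => c_p.
by rewrite ruleE (wls_mask_dot G_unit) -c_p horner_coef0 mxE.
Qed.

End WLPRRule.

Theorem theorem3p4 (R : realType) (phi : R -> R) (lam : R) (d : nat)
  (phi_range : forall x : R, 0 <= x <= 1 -> 0 <= phi x <= 1)
  (phi_noninc : forall x y : R, 0 <= x -> x <= y -> y <= 1 -> phi y <= phi x)
  (phi0 : phi 0 = 1)
  (lam_pos : 0 < lam)
  (lam_notnat : forall n : nat, lam != n%:R)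
  (Hinv : forall i : bool,
     ((Xmat lam d i)^T *m Wmat phi lam i *m Xmat lam d i) \in unitmx) :
  exists (a0 : 'cV[R]_(size (Mset lam false))) (a1 : 'cV[R]_(size (Mset lam true))),
    (* the linear scheme with sub-masks a0, a1 is the WLPR scheme S_{d,w^lambda} *)
    (forall (f : int -> R) (j : int) (i : bool),
        (exists p, wlpr_min phi lam d i f j p) /\
        (forall p, wlpr_min phi lam d i f j p ->
           subdiv a0 a1 f (2 * j + (i : nat)%:Z) = p.[0])) /\
    (* it reproduces Pi_d and its sub-masks are of the form W^i X^i alpha^i *)
    reproduces d a0 a1 /\
    (exists alpha0 : 'cV[R]_d.+1, a0 = Wmat phi lam false *m Xmat lam d false *m alpha0) /\
    (exists alpha1 : 'cV[R]_d.+1, a1 = Wmat phi lam true *m Xmat lam d true *m alpha1) /\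
    (* uniqueness among linear schemes of this form *)
    (forall (b0 : 'cV[R]_(size (Mset lam false))) (b1 : 'cV[R]_(size (Mset lam true))),
        reproduces d b0 b1 ->
        (exists alpha0 : 'cV[R]_d.+1, b0 = Wmat phi lam false *m Xmat lam d false *m alpha0) ->
        (exists alpha1 : 'cV[R]_d.+1, b1 = Wmat phi lam true *m Xmat lam d true *m alpha1) ->
        b0 = a0 /\ b1 = a1).
Proof.
pose a i := wls_mask (Xmat lam d i) (wlpr_weight phi lam i).
have a_reproduces i : rule_reproduces d (a i).
  exact/rule_reproducesP/wls_mask_moments/Hinv.
have a_unique i alpha : rule_reproduces d (Wmat phi lam i *m Xmat lam d i *m alpha) ->
    Wmat phi lam i *m Xmat lam d i *m alpha = a i.
  by move/rule_reproducesP; apply/wls_mask_unique/Hinv.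
exists (a false), (a true); split.
  move=> f j i; split.
    by exists (wlpr_poly phi lam d i f j); exact: (wlpr_poly_min phi_range f j (Hinv i)).
  move=> p p_min; rewrite subdiv_parity.
  by case: i p_min => /(wlpr_min_rule phi_range (Hinv _)).
split; first exact/reproducesE.
do 2 (split; first by rewrite /a /wls_mask; eexists).
move=> b0 b1 /reproducesE[repro0 repro1] [alpha0 b0E] [alpha1 b1E].
by rewrite b0E b1E in repro0 repro1 *; split; apply: a_unique.
Qed.
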